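(* Let $J\subseteq\mathbb{R}$ be an interval, $f:J\to\mathbb{R}$ convex, $a,b\in J$, and $\nu\in[0,1]$. Then $$2\widetilde r(\nu)\big(f(a)\nabla f(b)-f(a\nabla b)\big)\le f(a)\nabla_\nu f(b)-\mathfrak C_{f,\nu}(a,b)\le 2\widetilde R(\nu)\big(f(a)\nabla f(b)-f(a\nabla b)\big).$$
   Context: For real $x,y$ and $\mu\in[0,1]$, $x\nabla_\mu y:=(1-\mu)x+\mu y$ and $x\nabla y:=\frac{x+y}{2}$. For $f$ convex on an interval containing $a,b$, $$\mathfrak C_{f,\nu}(a,b):=(1-\nu)\int_0^1 f\big(a\nabla_{\nu\lambda}b\big)\,d\lambda+\nu\int_0^1 f\big(b\nabla_{(1-\nu)\lambda}a\big)\,d\lambda .$$ For $\lambda\in[0,1]$ let $r_1(\lambda)=\min\{\nu\lambda,1-\nu\lambda\}$, $r_2(\lambda)=\min\{(1-\nu)\lambda,1-(1-\nu)\lambda\}$, $R_1(\lambda)=\max\{\nu\lambda,1-\nu\lambda\}$, $R_2(\lambda)=\max\{(1-\nu)\lambda,1-(1-\nu)\lambda\}$, and $$\widetilde r(\nu):=\int_0^1\big((1-\nu)r_1(\lambda)+\nu r_2(\lambda)\big)d\lambda,\qquad \widetilde R(\nu):=\int_0^1\big((1-\nu)R_1(\lambda)+\nu R_2(\lambda)\big)d\lambda .$$ *)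

From Stdlib Require Import Reals.
From Coquelicot Require Import Coquelicot.
Open Scope R_scope.

Definition wmean (x y mu : R) : R := (1 - mu) * x + mu * y.
Definition amean (x y : R) : R := (x + y) / 2.

Definition is_interval (J : R -> Prop) : Prop :=
  forall x y z, J x -> J z -> x <= y -> y <= z -> J y.

Definition convex_on (J : R -> Prop) (f : R -> R) : Prop :=
  forall x y t, J x -> J y -> 0 <= t <= 1 ->
    f ((1 - t) * x + t * y) <= (1 - t) * f x + t * f y.

Definition Cfrak (f : R -> R) (nu a b : R) : R :=
  (1 - nu) * RInt (fun l => f (wmean a b (nu * l))) 0 1
  + nu * RInt (fun l => f (wmean b a ((1 - nu) * l))) 0 1.

Definition r1 (nu l : R) : R := Rmin (nu * l) (1 - nu * l).
Definition r2 (nu l : R) : R := Rmin ((1 - nu) * l) (1 - (1 - nu) * l).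
Definition R1 (nu l : R) : R := Rmax (nu * l) (1 - nu * l).
Definition R2 (nu l : R) : R := Rmax ((1 - nu) * l) (1 - (1 - nu) * l).

Definition r_tilde (nu : R) : R :=
  RInt (fun l => (1 - nu) * r1 nu l + nu * r2 nu l) 0 1.
Definition R_tilde (nu : R) : R :=
  RInt (fun l => (1 - nu) * R1 nu l + nu * R2 nu l) 0 1.

From Pilot Require Import Defs.
From Stdlib Require Import Reals Lra Classical.
From Coquelicot Require Import Coquelicot.
Open Scope R_scope.
Set Bullet Behavior "Strict Subproofs".

(* Write [D] for f(a)∇f(b) - f(a∇b) and [g(t)] for the Jensen gap
   (1-t) f(a) + t f(b) - f((1-t) a + t b), so that [D = g(1/2)].  Comparing the
   points a, (1-t) a + t b, a∇b and b by convexity gives the pointwise refinement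
   2 min(t, 1-t) D <= g(t) <= 2 max(t, 1-t) D.  The quantity
   f(a)∇_ν f(b) - C_{f,ν}(a,b) equals (1-ν) ∫ g(νλ) dλ + ν ∫ g'((1-ν)λ) dλ, where
   g' is the gap with a and b exchanged (g'(s) = g(1-s), same D); integrating
   the pointwise bounds gives the theorem.  The integrals exist because a convex
   function on an interval is continuous inside it and has one-sided limits at
   its ends, hence coincides on (a, b) with a continuous function. *)

Lemma continuous_of_pointwise_lipschitz (g : R -> R) z K d : 0 < d ->
  (forall x, Rabs (x - z) < d -> Rabs (g x - g z) <= K * Rabs (x - z)) ->
  continuous g z.
Proof.
intros Hd Hg; apply filterlim_locally; intros [eps Heps].
assert (HK : 0 < eps / (Rabs K + 1)).
{ apply Rdiv_lt_0_compat; [lra | pose proof (Rabs_pos K); lra]. }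
exists (mkposreal _ (Rmin_pos _ _ Hd HK)); intros x Hx.
change (Rabs (x - z) < Rmin d (eps / (Rabs K + 1))) in Hx.
change (Rabs (g x - g z) < eps).
pose proof (Rmin_l d (eps / (Rabs K + 1))); pose proof (Rmin_r d (eps / (Rabs K + 1))).
assert (Hlt : Rabs (x - z) * (Rabs K + 1) < eps).
{ pose proof (Rabs_pos K).
  replace eps with (eps / (Rabs K + 1) * (Rabs K + 1)) by (field; lra).
  apply Rmult_lt_compat_r; lra. }
pose proof (Hg x ltac:(lra)); pose proof (Rle_abs K); pose proof (Rabs_pos (x - z)).
nra.
Qed.

Lemma filterlim_at_right_nondecreasing (g : R -> R) a b m : a < b ->
  (forall x y, a < x -> x <= y -> y < b -> g x <= g y) ->
  (forall x, a < x < b -> m <= g x) ->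
  exists L, filterlim g (at_right a) (locally L).
Proof.
intros Hab Hmono Hm.
(* the limit is the infimum of [g] on (a, b), i.e. minus the supremum of [- g] *)
set (E := fun v => exists x, a < x < b /\ v = - g x).
assert (HE : bound E) by (exists (- m); intros v [x [Hx ->]]; specialize (Hm x Hx); lra).
assert (Hne : exists v, E v)
  by (exists (- g ((a + b) / 2)); exists ((a + b) / 2); split; [lra | reflexivity]).
destruct (completeness E HE Hne) as [M [HubM HleastM]].
exists (- M); apply filterlim_locally; intros eps.
assert (Hx0 : exists x0, a < x0 < b /\ g x0 < - M + eps).
{ apply NNPP; intros Hno.
  assert (Hub : is_upper_bound E (M - eps)).
  { intros v [x [Hx ->]].
    destruct (Rlt_le_dec (g x) (- M + eps)) as [Hlt | Hle]; [exfalso; eauto | lra]. }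
  specialize (HleastM _ Hub); pose proof (cond_pos eps); lra. }
destruct Hx0 as [x0 [Hx0 Hgx0]].
exists (mkposreal (x0 - a) ltac:(lra)); intros x Hx Hax.
change (Rabs (x - a) < x0 - a) in Hx.
change (Rabs (g x - - M) < eps).
assert (Hlow : - g x <= M)
  by (apply HubM; exists x; split; [apply Rabs_def2 in Hx; lra | reflexivity]).
assert (Hup : g x <= g x0) by (apply Hmono; apply Rabs_def2 in Hx; lra).
apply Rabs_def1; pose proof (cond_pos eps); lra.
Qed.

Lemma filterlim_at_right_affine_mul (g : R -> R) a b c s :
  filterlim g (at_right a) (locally s) ->
  filterlim (fun x => c + (x - b) * g x) (at_right a) (locally (c + (a - b) * s)).
Proof.
intros Hg.
apply (filterlim_comp_2 (G := locally (a - b)) (H := locally s) (fun x => x - b) g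
  (fun u y => c + u * y)); [| exact Hg |].
- apply (filterlim_filter_le_1 (F := locally a)); [apply filter_le_within |].
  apply (ex_derive_continuous (fun x => x - b)); auto_derive; trivial.
- apply (filterlim_comp_2 (G := locally c) (H := locally ((a - b) * s))
    (fun _ => c) (fun p : R * R => fst p * snd p) Rplus).
  + apply filterlim_const.
  + apply (filterlim_comp_2 (fun p : R * R => fst p) (fun p : R * R => snd p) Rmult
      filterlim_fst filterlim_snd (filterlim_mult (K := R_AbsRing) (a - b) s)).
  + apply (filterlim_plus (V := R_NormedModule) c ((a - b) * s)).
Qed.

Lemma RInt_lin_comb (u v : R -> R) p q a b : ex_RInt u a b -> ex_RInt v a b ->
  RInt (fun l => p * u l + q * v l) a b = p * RInt u a b + q * RInt v a b.
Proof.
intros Hu Hv.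
rewrite (RInt_plus (V := R_CompleteNormedModule) (fun l => p * u l) (fun l => q * v l));
  try apply (ex_RInt_scal (V := R_NormedModule)); auto.
rewrite (RInt_scal (V := R_CompleteNormedModule) u), (RInt_scal (V := R_CompleteNormedModule) v);
  auto.
Qed.

Definition jensen_gap (f : R -> R) (a b t : R) : R := wmean (f a) (f b) t - f (wmean a b t).

Definition slope (f : R -> R) (z x : R) : R := (f x - f z) / (x - z).

(* At [x = z] both sides are [f z], whatever the junk value [slope f z z] is. *)
Lemma slope_spec f z x : f x = f z + (x - z) * slope f z x.
Proof.
destruct (Req_dec x z) as [-> | Hxz]; [ring | unfold slope; field; lra].
Qed.

Lemma jensen_gap_sym f a b t : jensen_gap f b a (1 - t) = jensen_gap f a b t.
Proof.
unfold jensen_gap, wmean.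
replace ((1 - (1 - t)) * b + (1 - t) * a) with ((1 - t) * a + t * b) by ring; ring.
Qed.

Lemma jensen_gap_half f a b : jensen_gap f a b (1 / 2) = amean (f a) (f b) - f (amean a b).
Proof.
unfold jensen_gap, wmean, amean.
replace ((1 - 1 / 2) * a + 1 / 2 * b) with ((a + b) / 2) by field; field.
Qed.

Section ConvexOnInterval.

Variables (J : R -> Prop) (f : R -> R).
Hypotheses (HJ : is_interval J) (Hf : convex_on J f).

Lemma interval_wmean x y t : J x -> J y -> 0 <= t <= 1 -> J ((1 - t) * x + t * y).
Proof.
intros Hx Hy Ht; destruct (Rle_dec x y).
- apply (HJ x _ y); auto; nra.
- apply (HJ y _ x); auto; nra.
Qed.

Lemma convex_on_at x y t p : J x -> J y -> 0 <= t <= 1 ->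
  p = (1 - t) * x + t * y -> f p <= (1 - t) * f x + t * f y.
Proof. intros Hx Hy Ht ->; apply Hf; auto. Qed.

Lemma jensen_gap_bounds_half a b t : J a -> J b -> 0 <= t <= 1 / 2 ->
  2 * t * jensen_gap f a b (1 / 2) <= jensen_gap f a b t
  <= 2 * (1 - t) * jensen_gap f a b (1 / 2).
Proof.
intros Ha Hb Ht; unfold jensen_gap, wmean.
set (m := (1 - 1 / 2) * a + 1 / 2 * b); set (p := (1 - t) * a + t * b).
assert (Hm : J m) by (apply interval_wmean; auto; lra).
assert (Hp : J p) by (apply interval_wmean; auto; lra).
split.
- assert (f p <= (1 - 2 * t) * f a + 2 * t * f m).
  { apply convex_on_at; auto; [lra | unfold m, p; field]. }
  lra.
- (* the midpoint lies between p and b *)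
  set (s := (1 / 2 - t) / (1 - t)).
  assert (Hs : 0 <= s <= 1).
  { unfold s; split; [apply Rdiv_le_0_compat; lra|].
    apply (Rdiv_le_1 (1 / 2 - t) (1 - t)); lra. }
  assert (f m <= (1 - s) * f p + s * f b).
  { apply convex_on_at; auto; unfold m, p, s; field; lra. }
  assert (E : 2 * (1 - t) * ((1 - s) * f p + s * f b) = f p + (1 - 2 * t) * f b)
    by (unfold s; field; lra).
  assert (2 * (1 - t) * f m <= 2 * (1 - t) * ((1 - s) * f p + s * f b))
    by (apply Rmult_le_compat_l; lra).
  lra.
Qed.

Lemma jensen_gap_bounds a b t : J a -> J b -> 0 <= t <= 1 ->
  2 * Rmin t (1 - t) * jensen_gap f a b (1 / 2) <= jensen_gap f a b t
  <= 2 * Rmax t (1 - t) * jensen_gap f a b (1 / 2).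
Proof.
intros Ha Hb Ht; destruct (Rle_dec t (1 / 2)).
- rewrite Rmin_left, Rmax_right by lra; apply jensen_gap_bounds_half; auto; lra.
- rewrite Rmin_right, Rmax_left by lra.
  rewrite <- (jensen_gap_sym f a b t), <- (jensen_gap_sym f a b (1 / 2)).
  replace (1 - 1 / 2) with (1 / 2) by field.
  pose proof (jensen_gap_bounds_half b a (1 - t) Hb Ha ltac:(lra)); lra.
Qed.

Lemma convex_chord x y w : J x -> J w -> x < y < w ->
  (w - x) * f y <= (w - y) * f x + (y - x) * f w.
Proof.
intros Hx Hw Hy.
assert (f y <= (1 - (y - x) / (w - x)) * f x + (y - x) / (w - x) * f w).
{ apply convex_on_at; auto; [| field; lra].
  split; [apply Rdiv_le_0_compat; lra | apply (Rdiv_le_1 (y - x) (w - x)); lra]. }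
assert (E : (w - x) * ((1 - (y - x) / (w - x)) * f x + (y - x) / (w - x) * f w)
  = (w - y) * f x + (y - x) * f w) by (field; lra).
rewrite <- E; apply Rmult_le_compat_l; lra.
Qed.

Lemma slope_le z x y : J x -> J y -> J z -> x <= y -> x <> z -> y <> z ->
  slope f z x <= slope f z y.
Proof.
intros Hx Hy Hz Hxy Hxz Hyz.
destruct (Req_dec x y) as [<- | Hneq]; [lra |].
assert (E : slope f z y - slope f z x
  = ((y - x) * f z + (x - z) * f y - (y - z) * f x) / ((x - z) * (y - z))).
{ unfold slope; field; split; lra. }
enough (0 <= slope f z y - slope f z x) by lra.
(* the numerator has the sign given by the chord inequality for the ordered triple
   of points, the denominator the sign given by the position of z *)
rewrite E; destruct (Rlt_le_dec z x) as [Hzx | Hxz'].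
- pose proof (convex_chord z x y Hz Hy ltac:(lra)).
  apply Rdiv_le_0_compat; [lra | apply Rmult_lt_0_compat; lra].
- destruct (Rlt_le_dec z y) as [Hzy | Hyz'].
  + pose proof (convex_chord x z y Hx Hy ltac:(lra)).
    replace (_ / _) with
      (((y - z) * f x - (y - x) * f z - (x - z) * f y) / ((z - x) * (y - z)))
      by (field; split; lra).
    apply Rdiv_le_0_compat; [lra | apply Rmult_lt_0_compat; lra].
  + pose proof (convex_chord x y z Hx Hz ltac:(lra)).
    replace (_ / _) with
      (((y - x) * f z + (x - z) * f y - (y - z) * f x) / ((z - x) * (z - y)))
      by (field; split; lra).
    apply Rdiv_le_0_compat; [lra | apply Rmult_lt_0_compat; lra].
Qed.

Lemma convex_continuous u v z : J u -> J v -> u < z < v -> continuous f z.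
Proof.
intros Hu Hv Hz.
assert (HJz : J z) by (apply (HJ u z v); auto; lra).
(* near z, the slopes from z are squeezed between those towards u and towards v *)
apply (continuous_of_pointwise_lipschitz f z (Rmax (slope f z v) (- slope f z u))
  (Rmin (z - u) (v - z))); [apply Rmin_pos; lra |].
intros x Hx; apply Rabs_def2 in Hx.
pose proof (Rmin_l (z - u) (v - z)); pose proof (Rmin_r (z - u) (v - z)).
destruct (Req_dec x z) as [-> | Hxz].
- rewrite !Rminus_diag, Rabs_R0, Rmult_0_r; lra.
- assert (Hx' : J x) by (apply (HJ u x v); auto; lra).
  rewrite (slope_spec f z x), Rplus_minus_l, Rabs_mult, Rmult_comm.
  apply Rmult_le_compat_r; [apply Rabs_pos |].
  apply Rabs_le_between_Rmax; split; apply slope_le; auto; lra.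
Qed.

Lemma convex_right_limit a b : J a -> J b -> a < b ->
  exists L, filterlim f (at_right a) (locally L).
Proof.
intros Ha Hb Hab.
(* as x decreases to a, the slope from b to x decreases and stays above that to a *)
destruct (filterlim_at_right_nondecreasing (slope f b) a b (slope f b a) Hab)
  as [s Hs].
- intros x y Hx Hxy Hy; apply slope_le; auto; try lra; apply (HJ a _ b); auto; lra.
- intros x Hx; apply slope_le; auto; try lra; apply (HJ a _ b); auto; lra.
- exists (f b + (a - b) * s).
  apply (filterlim_ext (fun x => f b + (x - b) * slope f b x)).
  + intros x; symmetry; apply slope_spec.
  + apply filterlim_at_right_affine_mul, Hs.
Qed.

End ConvexOnInterval.

Lemma is_interval_opp J : is_interval J -> is_interval (fun x => J (- x)).
Proof. intros HJ x y z Hx Hz Hxy Hyz; apply (HJ (- z) _ (- x)); auto; lra. Qed.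

Lemma convex_on_opp J f : convex_on J f -> convex_on (fun x => J (- x)) (fun x => f (- x)).
Proof.
intros Hf x y t Hx Hy Ht.
replace (- ((1 - t) * x + t * y)) with ((1 - t) * - x + t * - y) by ring; auto.
Qed.

Lemma convex_left_limit J f a b : is_interval J -> convex_on J f -> J a -> J b -> a < b ->
  exists L, filterlim f (at_left b) (locally L).
Proof.
intros HJ Hf Ha Hb Hab.
destruct (convex_right_limit _ _ (is_interval_opp _ HJ) (convex_on_opp _ _ Hf) (- b) (- a))
  as [L HL]; rewrite ?Ropp_involutive; auto; try lra.
exists L; apply (filterlim_ext (fun x => f (- - x))); [intros x; rewrite Ropp_involutive; auto |].
exact (filterlim_comp _ _ _ _ _ _ _ _ (filterlim_Ropp_left b) HL).
Qed.

Lemma ex_RInt_convex J f a b : is_interval J -> convex_on J f -> J a -> J b ->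
  ex_RInt f a b.
Proof.
intros HJ Hf.
assert (Hlt : forall x y, J x -> J y -> x < y -> ex_RInt f x y).
{ intros x y Hx Hy Hxy.
  destruct (convex_right_limit J f HJ Hf x y Hx Hy Hxy) as [lx Hlx].
  destruct (convex_left_limit J f x y HJ Hf Hx Hy Hxy) as [ly Hly].
  destruct (C0_extension_lt f lx ly x y Hxy
    (fun c Hc => convex_continuous J f HJ Hf x y c Hx Hy Hc) Hlx Hly) as [g [Hg [Hgf _]]].
  apply (ex_RInt_ext g); [rewrite Rmin_left, Rmax_right by lra; auto |].
  apply (ex_RInt_continuous (V := R_CompleteNormedModule)); intros; apply Hg. }
intros Ha Hb; destruct (Rtotal_order a b) as [Hab | [<- | Hab]].
- auto.
- apply ex_RInt_point.
- apply ex_RInt_swap; auto.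
Qed.

Lemma convex_on_comp_affine J K f g : convex_on J f -> (forall x, K x -> J (g x)) ->
  (forall x y t, g ((1 - t) * x + t * y) = (1 - t) * g x + t * g y) ->
  convex_on K (fun x => f (g x)).
Proof. intros Hf HK Hg x y t Hx Hy Ht; rewrite Hg; apply Hf; auto. Qed.

Lemma Rmin_compl_lipschitz u v : Rabs (Rmin u (1 - u) - Rmin v (1 - v)) <= Rabs (u - v).
Proof. unfold Rmin, Rabs; repeat destruct Rle_dec; repeat destruct Rcase_abs; lra. Qed.

Lemma Rmax_compl_lipschitz u v : Rabs (Rmax u (1 - u) - Rmax v (1 - v)) <= Rabs (u - v).
Proof. unfold Rmax, Rabs; repeat destruct Rle_dec; repeat destruct Rcase_abs; lra. Qed.

Lemma ex_RInt_r1 c a b : ex_RInt (r1 c) a b.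
Proof.
apply (ex_RInt_continuous (V := R_CompleteNormedModule)); intros z _.
apply (continuous_of_pointwise_lipschitz _ z (Rabs c) 1); [lra |]; intros x _.
rewrite <- Rabs_mult, Rmult_minus_distr_l; apply Rmin_compl_lipschitz.
Qed.

Lemma ex_RInt_R1 c a b : ex_RInt (Defs.R1 c) a b.
Proof.
apply (ex_RInt_continuous (V := R_CompleteNormedModule)); intros z _.
apply (continuous_of_pointwise_lipschitz _ z (Rabs c) 1); [lra |]; intros x _.
rewrite <- Rabs_mult, Rmult_minus_distr_l; apply Rmax_compl_lipschitz.
Qed.

Lemma RInt_wmean_lin x y c : RInt (fun l => wmean x y (c * l)) 0 1 = wmean x y (c / 2).
Proof.
apply is_RInt_unique.
(* an antiderivative is [l |-> l * wmean x y (c * l / 2)] *)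
replace (wmean x y (c / 2)) with
  (minus (1 * wmean x y (c * 1 / 2)) (0 * wmean x y (c * 0 / 2)))
  by (unfold minus, plus, opp, wmean; simpl; field).
apply (is_RInt_derive (V := R_CompleteNormedModule) (fun l => l * wmean x y (c * l / 2))).
- intros l _; unfold wmean; auto_derive; [exact I | field].
- intros l _; apply (ex_derive_continuous (fun l => wmean x y (c * l))).
  unfold wmean; auto_derive; exact I.
Qed.

Lemma ex_RInt_convex_comp_wmean J f a b c : is_interval J -> convex_on J f -> J a -> J b ->
  0 <= c <= 1 -> ex_RInt (fun l => f (wmean a b (c * l))) 0 1.
Proof.
intros HJ Hf Ha Hb Hc.
apply (ex_RInt_convex (fun l => 0 <= l <= 1)); try lra.
- intros x y z Hx Hz Hxy Hyz; lra.
- apply (convex_on_comp_affine J); auto.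
  + intros l Hl; apply (interval_wmean J); auto; nra.
  + intros x y t; unfold wmean; ring.
Qed.

Lemma RInt_jensen_gap_bounds J f a b c : is_interval J -> convex_on J f -> J a -> J b ->
  0 <= c <= 1 ->
  2 * jensen_gap f a b (1 / 2) * RInt (r1 c) 0 1
    <= wmean (f a) (f b) (c / 2) - RInt (fun l => f (wmean a b (c * l))) 0 1
  /\ wmean (f a) (f b) (c / 2) - RInt (fun l => f (wmean a b (c * l))) 0 1
    <= 2 * jensen_gap f a b (1 / 2) * RInt (Defs.R1 c) 0 1.
Proof.
intros HJ Hf Ha Hb Hc.
set (G := jensen_gap f a b (1 / 2)).
assert (Hwmean : ex_RInt (fun l => wmean (f a) (f b) (c * l)) 0 1).
{ apply (ex_RInt_continuous (V := R_CompleteNormedModule)); intros z _.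
  apply (ex_derive_continuous (fun l => wmean (f a) (f b) (c * l))).
  unfold wmean; auto_derive; exact I. }
pose proof (ex_RInt_convex_comp_wmean J f a b c HJ Hf Ha Hb Hc) as Hcomp.
assert (Hgap : ex_RInt (fun l => jensen_gap f a b (c * l)) 0 1)
  by exact (ex_RInt_minus (V := R_NormedModule) _ _ _ _ Hwmean Hcomp).
assert (Hr : ex_RInt (fun l => 2 * G * r1 c l) 0 1)
  by exact (ex_RInt_scal (V := R_NormedModule) _ _ _ _ (ex_RInt_r1 c 0 1)).
assert (HR : ex_RInt (fun l => 2 * G * Defs.R1 c l) 0 1)
  by exact (ex_RInt_scal (V := R_NormedModule) _ _ _ _ (ex_RInt_R1 c 0 1)).
replace (wmean (f a) (f b) (c / 2) - RInt (fun l => f (wmean a b (c * l))) 0 1)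
  with (RInt (fun l => jensen_gap f a b (c * l)) 0 1).
2: { rewrite <- (RInt_wmean_lin (f a) (f b) c).
     exact (RInt_minus (V := R_CompleteNormedModule) _ _ _ _ Hwmean Hcomp). }
rewrite <- (RInt_scal (V := R_CompleteNormedModule) _ _ _ _ (ex_RInt_r1 c 0 1)).
rewrite <- (RInt_scal (V := R_CompleteNormedModule) _ _ _ _ (ex_RInt_R1 c 0 1)).
split; apply RInt_le; auto; try lra; intros l Hl;
  destruct (jensen_gap_bounds J f HJ Hf a b (c * l) Ha Hb ltac:(nra)) as [Hlo Hhi];
  fold G in Hlo, Hhi; unfold scal, r1, Defs.R1; simpl; unfold mult; simpl; lra.
Qed.

Theorem theorem2p17 (J : R -> Prop) (f : R -> R) (a b nu : R) :
  is_interval J -> convex_on J f -> J a -> J b -> 0 <= nu <= 1 ->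
  2 * r_tilde nu * (amean (f a) (f b) - f (amean a b))
    <= wmean (f a) (f b) nu - Cfrak f nu a b
  /\ wmean (f a) (f b) nu - Cfrak f nu a b
    <= 2 * R_tilde nu * (amean (f a) (f b) - f (amean a b)).
Proof.
intros HJ Hf Ha Hb Hnu.
destruct (RInt_jensen_gap_bounds J f a b nu HJ Hf Ha Hb Hnu) as [Hlo1 Hhi1].
destruct (RInt_jensen_gap_bounds J f b a (1 - nu) HJ Hf Hb Ha ltac:(lra)) as [Hlo2 Hhi2].
assert (Hsym : jensen_gap f b a (1 / 2) = jensen_gap f a b (1 / 2)).
{ rewrite <- (jensen_gap_sym f a b (1 / 2)); f_equal; field. }
rewrite Hsym in Hlo2, Hhi2; rewrite <- jensen_gap_half.
(* [r2 nu] and [R2 nu] are [r1 (1 - nu)] and [R1 (1 - nu)] by definition *)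
assert (Er : r_tilde nu = (1 - nu) * RInt (r1 nu) 0 1 + nu * RInt (r1 (1 - nu)) 0 1)
  by (apply RInt_lin_comb; apply ex_RInt_r1).
assert (ER : R_tilde nu = (1 - nu) * RInt (Defs.R1 nu) 0 1 + nu * RInt (Defs.R1 (1 - nu)) 0 1)
  by (apply RInt_lin_comb; apply ex_RInt_R1).
assert (EC : wmean (f a) (f b) nu - Cfrak f nu a b
  = (1 - nu) * (wmean (f a) (f b) (nu / 2) - RInt (fun l => f (wmean a b (nu * l))) 0 1)
  + nu * (wmean (f b) (f a) ((1 - nu) / 2) - RInt (fun l => f (wmean b a ((1 - nu) * l))) 0 1))
  by (unfold Cfrak, wmean; field).
rewrite Er, ER, EC.
split; nra.
Qed.
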